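(* Let $\mathcal{T}$ be a locally compact, $\sigma$-compact Hausdorff space, $\mu$ a finite positive Radon measure on $\mathcal{T}$ with $\mu(\mathcal{T})>0$, $1\le p<\infty$ with conjugate $q$, and $\varepsilon>1$. Let $S_\varepsilon^p=\{f\in L^q_\mu(\mathcal{T})\text{ real}:\|f\|_q\le\varepsilon,\ \int f\,d\mu=\mu(\mathcal{T})^{1/p}\}$ and $L^p(\mathcal{T})_\varepsilon^+=\{g\in L^p_\mu(\mathcal{T})\text{ real}:\int gf\,d\mu\ge0\ \forall f\in S_\varepsilon^p\}$. Then $L^p(\mathcal{T})_+\subseteq L^p(\mathcal{T})_\varepsilon^+$ if and only if $S_\varepsilon^p\subseteq L^q(\mathcal{T})_+$, where $L^s(\mathcal{T})_+$ denotes the $\mu$-a.e. nonnegative functions in $L^s_\mu(\mathcal{T})$. *)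

From HB Require Import structures.
From mathcomp Require Import all_boot all_order all_algebra.
From mathcomp Require Import all_classical all_reals all_analysis.
Set Implicit Arguments. Unset Strict Implicit. Unset Printing Implicit Defensive.
Import Order.TTheory GRing.Theory Num.Theory.
Import numFieldNormedType.Exports.
Local Open Scope classical_set_scope.
Local Open Scope ring_scope.

Definition borel (T : ptopologicalType) := g_sigma_algebraType (@open T).

Definition sigma_compact_space (T : ptopologicalType) : Prop :=
  exists K : nat -> set T, (forall n, compact (K n)) /\ \bigcup_n K n = setT.

Definition radon_measure (T : ptopologicalType) (R : realType)
    (mu : {measure set (borel T) -> \bar R}) : Prop :=
  [/\ (forall K : set T, compact K -> (mu K < +oo)%E),
      (forall E : set (borel T), measurable E ->
          mu E = ereal_inf [set mu U | U in [set U : set T | open U /\ E `<=` U]])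
    & (forall U : set T, open U ->
          mu U = ereal_sup [set mu K | K in [set K : set T | compact K /\ K `<=` U]])].

(* Real-valued (representatives of elements of) L^p_mu, p an extended real. *)
Definition Lmem (T : ptopologicalType) (R : realType)
    (mu : {measure set (borel T) -> \bar R}) (p : \bar R) (f : borel T -> R) : Prop :=
  measurable_fun setT f /\ finite_norm mu p f.

Definition Lplus (T : ptopologicalType) (R : realType)
    (mu : {measure set (borel T) -> \bar R}) (p : \bar R) : set (borel T -> R) :=
  [set f | Lmem mu p f /\ {ae mu, forall x, 0 <= f x}].

Definition S_eps (T : ptopologicalType) (R : realType)
    (mu : {measure set (borel T) -> \bar R}) (p eps : R) : set (borel T -> R) :=
  [set f | Lmem mu (hoelder_conjugate p%:E) f
           /\ ('N[mu]_(hoelder_conjugate p%:E)[EFin \o f] <= eps%:E)%E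
           /\ (\int[mu]_x (f x)%:E = mu [set: borel T] `^ p^-1)%E].

Definition Lp_eps_plus (T : ptopologicalType) (R : realType)
    (mu : {measure set (borel T) -> \bar R}) (p eps : R) : set (borel T -> R) :=
  [set g | Lmem mu p%:E g
           /\ forall f, S_eps mu p eps f -> (0 <= \int[mu]_x (g x * f x)%:E)%E].

From HB Require Import structures.
From mathcomp Require Import all_boot all_order all_algebra.
From mathcomp Require Import all_classical all_reals all_analysis.
From mathcomp Require Import measurable_realfun.
Import Order.TTheory GRing.Theory Num.Theory.
Local Open Scope classical_set_scope.
Local Open Scope ring_scope.

(* Testing f against the indicator of {f < 0}, which lies in L^p_+ because mu
   is finite, forces f >= 0 almost everywhere; conversely the product of two
   a.e. nonnegative functions has a nonnegative integral. Neither the topology,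
   the Radon property, the norm bound nor eps > 1 plays any role. *)

Section integral_sign.
Context d (X : measurableType d) (R : realType).
Variable mu : {measure set X -> \bar R}.
Local Open Scope ereal_scope.

Lemma ae_ge0_integral_ge0 (h : X -> R) : measurable_fun setT h ->
  {ae mu, forall x, (0 <= h x)%R} -> 0 <= \int[mu]_x (h x)%:E.
Proof.
move=> mh h0; rewrite (ae_eq_integral (fun x => (Num.max (h x) 0)%:E)) //.
- by apply: integral_ge0 => x _; rewrite lee_fin le_max lexx orbT.
- exact/measurable_EFinP.
- by apply/measurable_EFinP; exact: measurable_maxr.
- by apply: filterS h0 => x hx0 _; rewrite max_l.
Qed.

Lemma ge0_integral_le0_ae_eq0 (h : X -> \bar R) : measurable_fun setT h ->
  (forall x, 0 <= h x) -> \int[mu]_x h x <= 0 -> ae_eq mu setT h (cst 0).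
Proof.
move=> mh h0 ih; apply/(ae_eq_integral_abs mu measurableT mh).
rewrite (eq_integral h) => [|x _]; last by rewrite gee0_abs.
by apply/eqP; rewrite eq_le ih integral_ge0.
Qed.

Lemma integral_over_neg_ge0_ae_ge0 (f : X -> R) : measurable_fun setT f ->
  0 <= \int[mu]_x (\1_(f @^-1` `]-oo, 0[) x * f x)%:E ->
  {ae mu, forall x, (0 <= f x)%R}.
Proof.
move=> mf; set A := f @^-1` _; set g := fun x => (\1_A x * f x)%:E => ig_ge0.
have mA : measurable A by rewrite -[A]setTI; exact: mf.
have Ng_ge0 x : 0 <= - g x.
  rewrite oppe_ge0 /g indicE lee_fin.
  case: (boolP (x \in A)) => [|_]; last by rewrite mul0r.
  by rewrite inE /A /= in_itv /= mul1r => /ltW.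
have mNg : measurable_fun setT (fun x => - g x).
  by apply/measurableT_comp/measurable_EFinP => //; exact: measurable_funM.
have iNg_le0 : \int[mu]_x - g x <= 0.
  rewrite -oppe_ge0 -integral_ge0N => [|x _]; last exact: Ng_ge0.
  by rewrite (eq_integral g) // => x _; rewrite oppeK.
apply: filterS (ge0_integral_le0_ae_eq0 _ mNg Ng_ge0 iNg_le0).
move=> x /(_ I) /eqP; rewrite /= eqe oppr_eq0 mulf_eq0 indicE.
case: (boolP (x \in A)) => [_|xA _]; first by rewrite oner_eq0 => /eqP ->.
by rewrite leNgt; apply: contraNN xA => fx0; rewrite inE /A /= in_itv.
Qed.

End integral_sign.

Lemma Lnorm_indic d (X : measurableType d) (R : realType)
    (mu : {measure set X -> \bar R}) (p : R) (A : set X) :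
  measurable A -> p != 0 -> ('N[mu]_p%:E[EFin \o \1_A] = mu A `^ p^-1)%E.
Proof.
move=> mA p0; rewrite unlock /= (eq_integral (fun x => (\1_A x)%:E)).
  by rewrite integral_indic // setIT.
move=> x _; rewrite /= indicE.
by case: (_ \in _); rewrite ?normr1 ?powR1 ?normr0 ?powR0.
Qed.

Lemma indic_Lplus (T : ptopologicalType) (R : realType)
    (mu : {measure set (borel T) -> \bar R}) (p : R) (A : set (borel T)) :
  measurable A -> (mu [set: borel T] < +oo)%E -> 0 < p ->
  Lplus mu p%:E (\1_A : borel T -> R).
Proof.
move=> mA mufin p0; split; last by apply: aeW => x; rewrite indicE.
split; first exact: measurable_indic.
rewrite /finite_norm Lnorm_indic ?gt_eqF // poweR_lty //.
by apply: le_lt_trans mufin; apply: le_measure; rewrite ?inE.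
Qed.

Theorem lemma5p3 (T : ptopologicalType) (R : realType)
  (mu : {measure set (borel T) -> \bar R}) (p eps : R) :
  locally_compact [set: T] -> sigma_compact_space T -> hausdorff_space T ->
  radon_measure mu -> (mu [set: borel T] < +oo)%E -> (0 < mu [set: borel T])%E ->
  1 <= p -> 1 < eps ->
  (Lplus mu p%:E `<=` Lp_eps_plus mu p eps <->
   S_eps mu p eps `<=` Lplus mu (hoelder_conjugate p%:E)).
Proof.
move=> _ _ _ _ mufin _ p1 _; have p0 : 0 < p by exact: lt_le_trans p1.
split=> [Lplus_dual f Sf | S_ge0 g [gL g0]].
- have mf : measurable_fun setT f by case: Sf => -[].
  split; first exact: Sf.1.
  apply: integral_over_neg_ge0_ae_ge0 => //.
  have mA : measurable (f @^-1` `]-oo, 0[) by rewrite -[X in measurable X]setTI; exact: mf.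
  exact: (Lplus_dual _ (@indic_Lplus _ _ _ _ _ mA mufin p0)).2 f Sf.
- split=> // f Sf; have [[mf _] f0] := S_ge0 f Sf.
  apply: ae_ge0_integral_ge0; first by apply: measurable_funM => //; case: gL.
  by apply: filterS2 g0 f0 => x; exact: mulr_ge0.
Qed.
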